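(* Let $\mathcal Z,\mathcal S,\mathcal U$ be finite alphabets and let $p_{ZS}$, $p_{SU}$ be joint types of length-$n$ sequences on $\mathcal Z\times\mathcal S$ and $\mathcal S\times\mathcal U$ having the same $S$-marginal $p_S$. Define the pmf $P^\star_{ZSU}(z,s,u)=p_{Z|S}(z|s)p_{SU}(s,u)$, where $p_{Z|S}(z|s)=p_{ZS}(z,s)/p_S(s)$ when $p_S(s)>0$ (and $P^\star_{ZSU}(z,s,u)=0$ when $p_S(s)=0$). Let $$\mathcal A=\Big\{p_{Z_1S_1U_1}\in\mathcal P_n(\mathcal Z\times\mathcal S\times\mathcal U):\ p_{Z_1S_1}=p_{ZS},\ p_{S_1U_1}=p_{SU},\ |p_{Z_1S_1U_1}-P^\star_{ZSU}|_\infty\le\tfrac1n\Big\}.$$ Then $P^\star_{ZSU}$ belongs to the convex hull of $\mathcal A$.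
   Context: $\mathcal P_n(\mathcal Z\times\mathcal S\times\mathcal U)$ is the set of joint types of length-$n$ sequences, i.e., pmfs all of whose entries are integer multiples of $1/n$; $p_{Z_1S_1}$, $p_{S_1U_1}$ are marginals of $p_{Z_1S_1U_1}$; $|P-Q|_\infty=\max|P(\cdot)-Q(\cdot)|$. The convex hull of a finite set of vectors is the set of all their convex combinations. *)

From HB Require Import structures.
From mathcomp Require Import all_boot all_order all_algebra.
Set Implicit Arguments. Unset Strict Implicit. Unset Printing Implicit Defensive.
Import Order.TTheory GRing.Theory Num.Theory.
Local Open Scope ring_scope.

Section Defs.
Variable R : realFieldType.

Definition is_type (T : finType) (n : nat) (p : {ffun T -> R}) : Prop :=
  (forall t, exists k : nat, p t = k%:R / n%:R) /\ \sum_(t : T) p t = 1.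

Variables Z S U : finType.

Definition margS_ZS (p : {ffun Z * S -> R}) (s : S) : R := \sum_(z : Z) p (z, s).
Definition margS_SU (p : {ffun S * U -> R}) (s : S) : R := \sum_(u : U) p (s, u).
Definition margZS (q : {ffun Z * S * U -> R}) : {ffun Z * S -> R} :=
  [ffun zs => \sum_(u : U) q (zs.1, zs.2, u)].
Definition margSU (q : {ffun Z * S * U -> R}) : {ffun S * U -> R} :=
  [ffun su => \sum_(z : Z) q (z, su.1, su.2)].

Definition Pstar (pZS : {ffun Z * S -> R}) (pSU : {ffun S * U -> R})
  : {ffun Z * S * U -> R} :=
  [ffun x => let: (z, s, u) := x in
     if margS_ZS pZS s == 0 then 0
     else pZS (z, s) / margS_ZS pZS s * pSU (s, u)].

Definition sup_dist (T : finType) (p q : {ffun T -> R}) : R :=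
  \big[Num.max/0]_(t : T) `|p t - q t|.

Definition setA (n : nat) (pZS : {ffun Z * S -> R}) (pSU : {ffun S * U -> R})
  (q : {ffun Z * S * U -> R}) : Prop :=
  [/\ is_type n q, margZS q = pZS, margSU q = pSU &
      sup_dist q (Pstar pZS pSU) <= 1 / n%:R].
End Defs.

Definition in_conv_hull (R : realFieldType) (T : finType)
  (A : {ffun T -> R} -> Prop) (x : {ffun T -> R}) : Prop :=
  exists (m : nat) (w : 'I_m -> R) (q : 'I_m -> {ffun T -> R}),
    [/\ forall i, 0 <= w i, \sum_(i < m) w i = 1, forall i, A (q i) &
        forall t, x t = \sum_(i < m) w i * q i t].

From HB Require Import structures.
From mathcomp Require Import all_boot all_order all_algebra.
From mathcomp Require Import ring lra zify.

(* Scaled by n, P* is the array N_ZS(z,s) N_SU(s,u) / N_S(s) built from the count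
   vectors of the two types: its sums over u and over z are the integers N_ZS and N_SU,
   and each entry lies between its floor and its floor plus one.  The points of this box
   with these margins form a transportation polytope with integral vertices.  Indeed, if
   a point has fractional entries, every row (z,s) or column (s,u) through one of them
   contains at least two, so there are at most as many such lines as fractional entries,
   and a nonzero direction supported on the fractional entries preserves all margins.
   Moving both ways along it until some entry becomes integral writes the point as a
   convex combination of two points with fewer fractional entries.  Divided by n, the
   integral points of the box are joint types in A. *)

Set Implicit Arguments.
Unset Strict Implicit.
Unset Printing Implicit Defensive.

Import Order.TTheory GRing.Theory Num.Theory.
Local Open Scope ring_scope.

Section ConvexHull.
Variables (R : realFieldType) (T : finType) (A : {ffun T -> R} -> Prop).

Lemma in_conv_hull_mem x : A x -> in_conv_hull A x.
Proof.
by move=> Ax; exists 1%N, (fun=> 1), (fun=> x); split=> // [|t]; rewrite big_ord1 ?mul1r.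
Qed.

Lemma in_conv_hull_comb (c : R) (x x1 x2 : {ffun T -> R}) : 0 <= c <= 1 ->
  in_conv_hull A x1 -> in_conv_hull A x2 ->
  (forall t, x t = c * x1 t + (1 - c) * x2 t) -> in_conv_hull A x.
Proof.
move=> /andP[c_ge0 c_le1] [m1 [w1 [q1 [w1_ge0 w1_sum Aq1 x1E]]]].
move=> [m2 [w2 [q2 [w2_ge0 w2_sum Aq2 x2E]]]] xE.
pose w i := match split i with inl j => c * w1 j | inr j => (1 - c) * w2 j end.
pose q i := match split i with inl j => q1 j | inr j => q2 j end.
have splitl (j : 'I_m1) : split (lshift m2 j) = inl j := unsplitK (inl j).
have splitr (j : 'I_m2) : split (rshift m1 j) = inr j := unsplitK (inr j).
have wl j : w (lshift m2 j) = c * w1 j by rewrite /w splitl.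
have wr j : w (rshift m1 j) = (1 - c) * w2 j by rewrite /w splitr.
exists (m1 + m2)%N, w, q; split.
- by move=> i; rewrite /w; case: split => j; apply: mulr_ge0; rewrite ?subr_ge0.
- rewrite big_split_ord (eq_bigr _ (fun j _ => wl j)) (eq_bigr _ (fun j _ => wr j)).
  by rewrite -!mulr_sumr w1_sum w2_sum !mulr1 /= addrC subrK.
- by move=> i; rewrite /q; case: split.
- move=> t; rewrite big_split_ord xE x1E x2E !mulr_sumr /q.
  by congr (_ + _); apply: eq_bigr => j _; rewrite ?wl ?wr ?splitl ?splitr mulrA.
Qed.

Lemma in_conv_hull_scale (B : {ffun T -> R} -> Prop) (c : R) x :
  (forall y, A y -> B [ffun t => c * y t]) ->
  in_conv_hull A x -> in_conv_hull B [ffun t => c * x t].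
Proof.
move=> AB [m [w [q [w_ge0 w_sum Aq xE]]]].
exists m, w, (fun i => [ffun t => c * q i t]); split=> // [i|t]; first exact: AB.
by rewrite ffunE xE mulr_sumr; apply: eq_bigr => i _; rewrite ffunE mulrCA.
Qed.

End ConvexHull.

Definition is_int (R : numDomainType) (x : R) := exists k : int, x = k%:~R.

Lemma is_int_sum (R : numDomainType) (I : Type) (s : seq I) (P : pred I) (f : I -> R) :
  (forall i, P i -> is_int (f i)) -> is_int (\sum_(i <- s | P i) f i).
Proof.
move=> f_int; apply: (big_ind (@is_int R)) => //; first by exists 0.
by move=> x y [a ->] [b ->]; exists (a + b); rewrite intrD.
Qed.

Lemma exists_nonzero_solution (F : fieldType) (I J : finType) (c : J -> I -> F) :
  (#|J| < #|I|)%N ->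
  exists2 v : {ffun I -> F}, exists i, v i != 0 & forall j, \sum_i c j i * v i = 0.
Proof.
move=> card_lt.
pose C : 'M[F]_(#|I|, #|J|) := \matrix_(i, j) c (enum_val j) (enum_val i).
have [K KC0 /matrix0Pn[k [i Kki]]] : exists2 K : 'M_#|I|, K *m C = 0 & K != 0.
  exists (kermx C); first exact: mulmx_ker.
  rewrite -mxrank_eq0 mxrank_ker -lt0n subn_gt0.
  exact: leq_ltn_trans (rank_leq_col C) card_lt.
exists [ffun x => K k (enum_rank x)]; first by exists (enum_val i); rewrite ffunE enum_valK.
move=> j; transitivity ((K *m C) k (enum_rank j)); last by rewrite KC0 mxE.
rewrite mxE (reindex enum_rank) /=; last exact/onW_bij/enum_rank_bij.
by apply: eq_bigr => x _; rewrite mxE ffunE !enum_rankK mulrC.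
Qed.

Section IntegralDecomposition.
Variables (R : realFieldType) (T A B : finType) (row : T -> A) (col : T -> B).
Variables (lo : T -> int) (r : A + B -> R).
Hypothesis r_int : forall e, is_int (r e).

Definition on_line (t : T) (e : A + B) : bool :=
  match e with inl a => row t == a | inr b => col t == b end.

Definition marg (M : T -> R) (e : A + B) : R := \sum_(t | on_line t e) M t.

Definition in_box (M : {ffun T -> R}) : Prop :=
  forall t, (lo t)%:~R <= M t <= (lo t)%:~R + 1.

Definition frac_support (M : {ffun T -> R}) : {set T} :=
  [set t | (lo t)%:~R < M t < (lo t)%:~R + 1].

Definition integral_point (N : {ffun T -> R}) : Prop :=
  [/\ forall t, is_int (N t), in_box N & forall e, marg N e = r e].

Definition translate (M v : {ffun T -> R}) (al : R) : {ffun T -> R} :=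
  [ffun t => M t + al * v t].

Lemma marg_translate M v al e : marg (translate M v al) e = marg M e + al * marg v e.
Proof. by rewrite /marg mulr_sumr -big_split; apply: eq_bigr => t _; rewrite ffunE. Qed.

Lemma marg_scale c (M : {ffun T -> R}) e : marg [ffun t => c * M t] e = c * marg M e.
Proof. by rewrite /marg mulr_sumr; apply: eq_bigr => t _; rewrite ffunE. Qed.

Lemma translate_opp (M v : {ffun T -> R}) al : translate M (- v) al = translate M v (- al).
Proof. by apply/ffunP => t; rewrite !ffunE mulrN mulNr. Qed.

Lemma frac_not_int M t : t \in frac_support M -> ~ is_int (M t).
Proof.
rewrite inE => /andP[lo_lt lt_lo1] [k Mk]; move: lo_lt lt_lo1.
have -> : (lo t)%:~R + 1 = (lo t + 1)%:~R :> R by rewrite intrD.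
by rewrite Mk !ltr_int; lia.
Qed.

Lemma is_int_off_frac_support M t : in_box M -> t \notin frac_support M -> is_int (M t).
Proof.
move=> /(_ t) /andP[lo_le le_lo1]; rewrite inE negb_and -!leNgt => /orP[le_lo|lo1_le].
  by exists (lo t); apply/eqP; rewrite eq_le le_lo lo_le.
by exists (lo t + 1); rewrite intrD; apply/eqP; rewrite eq_le lo1_le le_lo1.
Qed.

Lemma frac_line_card M e : in_box M -> is_int (marg M e) ->
  (exists2 t, t \in frac_support M & on_line t e) ->
  (1 < #|[set t in frac_support M | on_line t e]|)%N.
Proof.
move=> Mbox [k Mk] [t1 t1F t1e]; rewrite ltnNge; apply/negP => card_le1.
have /cards1P[t0 F1] : #|[set t in frac_support M | on_line t e]| == 1%N.
  by rewrite eqn_leq card_le1; apply/card_gt0P; exists t1; rewrite inE t1F.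
have /setIdP[t0F t0e] : t0 \in [set t in frac_support M | on_line t e].
  by rewrite F1 set11.
apply: (frac_not_int t0F).
have [k' k'E] : is_int (\sum_(t | on_line t e && (t != t0)) M t).
  apply: is_int_sum => t /andP[te t_neq0]; apply: is_int_off_frac_support => //.
  by apply: contra t_neq0 => tF; rewrite -in_set1 -F1 inE tF.
by exists (k - k'); move: Mk; rewrite /marg (bigD1 t0) //= k'E intrB => <-; rewrite addrK.
Qed.

Lemma on_line_count t : (\sum_e on_line t e = 2)%N.
Proof.
have count1 (X : finType) (x : X) : (\sum_y (x == y : nat) = 1)%N.
  by rewrite (bigD1 x) //= eqxx big1 // => y; rewrite eq_sym => /negPf ->.
by rewrite big_sumType /= !count1.
Qed.

Lemma card_frac_lines M : in_box M -> (forall e, is_int (marg M e)) ->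
  (#|[set e | [exists t in frac_support M, on_line t e]]| <= #|frac_support M|)%N.
Proof.
move=> Mbox marg_int; set L := [set e | _]; set F := frac_support M.
have card_line e : #|[set t in F | on_line t e]| = (\sum_(t in F) on_line t e)%N.
  rewrite -sum1_card big_mkcond [RHS]big_mkcond; apply: eq_bigr => t _.
  by rewrite inE; case: (t \in F); case: (on_line t e).
have double_count : (\sum_e #|[set t in F | on_line t e]| = 2 * #|F|)%N.
  under eq_bigr do rewrite card_line.
  by rewrite exchange_big /= (eq_bigr _ (fun t _ => on_line_count t)) sum_nat_const mulnC.
rewrite -(leq_pmul2l (isT : 0 < 2)%N) -double_count mulnC -sum_nat_const.
rewrite [X in (_ <= X)%N](bigID (mem L)) /=; apply: leq_trans (leq_addr _ _).
apply: leq_sum => e; rewrite inE => /existsP[t /andP[tF te]].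
by apply: frac_line_card => //; exists t.
Qed.

Lemma marg_eq0_of_others (v : T -> R) a0 :
  (forall e, e != inl a0 -> marg v e = 0) -> forall e, marg v e = 0.
Proof.
move=> v0 e; have [->|] := eqVneq e (inl a0); last exact: v0.
have v_sum0 : \sum_t v t = 0.
  by rewrite (partition_big col predT) //= big1 // => b _; exact: (v0 (inr b)).
have others0 : \sum_(a | a != a0) marg v (inl a) = 0.
  by apply: big1 => a a_neq0; exact: (v0 (inl a) a_neq0).
by rewrite (partition_big row predT) //= (bigD1 a0) //= others0 addr0 in v_sum0.
Qed.

Lemma frac_direction_exists M : in_box M -> (forall e, is_int (marg M e)) ->
  frac_support M != set0 ->
  exists v : {ffun T -> R}, [/\ exists t, v t != 0,
    forall t, t \notin frac_support M -> v t = 0 & forall e, marg v e = 0].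
Proof.
move=> Mbox marg_int /set0Pn[t1 t1F]; set F := frac_support M.
set L := [set e | [exists t in F, on_line t e]].
set L' := L :\ inl (row t1).
(* The row margins and the column margins of v both add up to its total, so one row
   constraint is redundant (marg_eq0_of_others); without it there are fewer equations
   than unknowns. *)
have card_L' : (#|L'| < #|F|)%N.
  have row1_L : inl (row t1) \in L by rewrite inE; apply/existsP; exists t1; rewrite t1F /=.
  have := card_frac_lines Mbox marg_int.
  by rewrite -/F -/L (cardsD1 (inl (row t1)) L) row1_L.
pose Eq := ({e | e \in L'} + {t | t \notin F})%type.
have card_Eq : (#|{: Eq}| < #|T|)%N.
  rewrite card_sum !card_sig -(cardsC F).
  have notF_card : #|[pred t | t \notin F]| = #|~: F| by apply: eq_card => t; rewrite !inE.
  by rewrite notF_card ltn_add2r.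
pose c (q : Eq) (t : T) : R :=
  match q with inl e => (on_line t (val e))%:R | inr t' => (t == val t')%:R end.
have [v v_nz v_sol] := exists_nonzero_solution c card_Eq.
have v_supp t : t \notin F -> v t = 0.
  move=> tF; rewrite -[RHS](v_sol (inr (exist _ t tF))) /c /= (bigD1 t) //= eqxx mul1r.
  by rewrite big1 ?addr0 // => t' /negPf ->; rewrite mul0r.
have marg_v_L' e : e \in L' -> marg v e = 0.
  move=> eL'; rewrite -(v_sol (inl (exist _ e eL'))) /marg /c /= big_mkcond /=.
  by apply: eq_bigr => t _; case: (on_line t e); rewrite ?mul1r ?mul0r.
exists v; split=> //; apply: (marg_eq0_of_others (a0 := row t1)) => e e_neq.
have [eL|eL] := boolP (e \in L); first by apply: marg_v_L'; rewrite in_setD1 e_neq.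
rewrite /marg big1 // => t te; apply: v_supp; apply: contra eL => tF.
by rewrite inE; apply/existsP; exists t; rewrite tF.
Qed.

Definition exit_time (M v : {ffun T -> R}) (t : T) : R :=
  ((if 0 < v t then (lo t)%:~R + 1 else (lo t)%:~R) - M t) / v t.

Lemma exit_time_gt0 (M v : {ffun T -> R}) t :
  t \in frac_support M -> v t != 0 -> 0 < exit_time M v t.
Proof.
rewrite inE => /andP[lo_lt lt_lo1] vt_neq0; rewrite /exit_time; case: ifP => vt_gt0.
  by rewrite divr_gt0 // subr_gt0.
have vt_lt0 : v t < 0 by rewrite lt_neqAle vt_neq0 leNgt vt_gt0.
by rewrite -mulrNN -invrN divr_gt0 // oppr_gt0 // subr_lt0.
Qed.

Lemma translate_in_box_at (M v : {ffun T -> R}) t al :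
  (lo t)%:~R <= M t <= (lo t)%:~R + 1 -> v t != 0 -> 0 <= al <= exit_time M v t ->
  (lo t)%:~R <= M t + al * v t <= (lo t)%:~R + 1.
Proof.
move=> /andP[lo_le le_lo1] vt_neq0 /andP[al_ge0]; rewrite /exit_time.
case: ifP => vt_gt0 al_le.
  have : al * v t <= (lo t)%:~R + 1 - M t by rewrite -ler_pdivlMr.
  have : 0 <= al * v t by rewrite mulr_ge0 // ltW.
  by move=> *; apply/andP; split; lra.
have vt_lt0 : v t < 0 by rewrite lt_neqAle vt_neq0 leNgt vt_gt0.
have : (lo t)%:~R - M t <= al * v t by rewrite -ler_ndivlMr.
have : al * v t <= 0 by rewrite mulr_ge0_le0 // ltW.
by move=> *; apply/andP; split; lra.
Qed.

Lemma exit_time_not_frac (M v : {ffun T -> R}) t : v t != 0 ->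
  t \notin frac_support (translate M v (exit_time M v t)).
Proof.
by move=> vt_neq0; rewrite inE ffunE divfK // addrC subrK; case: ifP; rewrite ltxx ?andbF.
Qed.

Lemma translate_frac_support_proper (M v : {ffun T -> R}) :
  in_box M -> (exists t, v t != 0) -> (forall t, t \notin frac_support M -> v t = 0) ->
  exists2 al, 0 < al & in_box (translate M v al) /\
    frac_support (translate M v al) \proper frac_support M.
Proof.
move=> Mbox [t1 vt1] v_supp.
have suppF t : v t != 0 -> t \in frac_support M.
  by move=> vt_neq0; apply: contraR vt_neq0 => /v_supp ->; rewrite eqxx.
have [t0 vt0 t0_min] := @arg_minP _ _ _ t1 (fun t => v t != 0) (exit_time M v) vt1.
exists (exit_time M v t0); first exact: exit_time_gt0 (suppF t0 vt0) vt0.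
split.
  move=> t; rewrite ffunE; have [->|vt_neq0] := eqVneq (v t) 0.
    by rewrite mulr0 addr0 Mbox.
  apply: translate_in_box_at => //.
  by rewrite t0_min // ltW // exit_time_gt0 // suppF.
apply/properP; split; last by exists t0; [exact: suppF | exact: exit_time_not_frac].
apply/subsetP => t; apply: contraTT => tF.
by rewrite inE ffunE v_supp // mulr0 addr0; rewrite inE in tF.
Qed.

Lemma in_conv_hull_integral_points M : in_box M -> (forall e, marg M e = r e) ->
  in_conv_hull integral_point M.
Proof.
have [k] := ubnP #|frac_support M|; elim: k M => // k IH M card_lt Mbox Mmarg.
have [F0|F_neq0] := eqVneq (frac_support M) set0.
  apply: in_conv_hull_mem; split=> // t.
  by apply: is_int_off_frac_support => //; rewrite F0 inE.
have marg_int e : is_int (marg M e) by rewrite Mmarg.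
have [v [v_neq0 v_supp v_marg]] := frac_direction_exists Mbox marg_int F_neq0.
have [al al_gt0 [box_al proper_al]] := translate_frac_support_proper Mbox v_neq0 v_supp.
have Nv_neq0 : exists t, (- v) t != 0.
  by case: v_neq0 => t vt; exists t; rewrite ffunE oppr_eq0.
have Nv_supp t : t \notin frac_support M -> (- v) t = 0.
  by move=> /v_supp vt; rewrite ffunE vt oppr0.
have [be be_gt0] := translate_frac_support_proper Mbox Nv_neq0 Nv_supp.
rewrite translate_opp => -[box_be proper_be].
have al_be_gt0 : 0 < al + be by rewrite addr_gt0.
apply: (@in_conv_hull_comb _ _ _ (be / (al + be)) _
  (translate M v al) (translate M v (- be))).
- apply/andP; split; first by rewrite divr_ge0 // ltW.
  by rewrite ler_pdivrMr // mul1r lerDr ltW.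
- apply: IH => // [|e]; last by rewrite marg_translate v_marg mulr0 addr0.
  exact: leq_trans (proper_card proper_al) card_lt.
- apply: IH => // [|e]; last by rewrite marg_translate v_marg mulr0 addr0.
  exact: leq_trans (proper_card proper_be) card_lt.
- by move=> t; rewrite !ffunE; field; rewrite lt0r_neq0.
Qed.

End IntegralDecomposition.

Lemma natr_divn_bounds (R : numFieldType) (m d : nat) :
  (m %/ d)%:R <= (m%:R / d%:R : R) <= (m %/ d)%:R + 1.
Proof.
have [->|d_gt0] := posnP d; first by rewrite divn0 invr0 mulr0 lexx add0r ler01.
have d_pos : 0 < d%:R :> R by rewrite ltr0n.
rewrite {2 3}(divn_eq m d) natrD natrM mulrDl mulfK ?lt0r_neq0 // lerDl divr_ge0 //=.
by rewrite lerD2l ler_pdivrMr // mul1r ler_nat ltnW // ltn_pmod.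
Qed.

Definition count_pmf (R : fieldType) (T : finType) (n : nat) (k : T -> nat)
  : {ffun T -> R} := [ffun t => (k t)%:R / n%:R].

Lemma sum_count_pmf (R : fieldType) (I T : finType) n (k : T -> nat) (f : I -> T) :
  \sum_i count_pmf R n k (f i) = (\sum_i k (f i))%:R / n%:R.
Proof. by rewrite natr_sum mulr_suml; apply: eq_bigr => i _; rewrite ffunE. Qed.

Lemma is_type_count_pmf (R : realFieldType) (T : finType) n (p : {ffun T -> R}) :
  (0 < n)%N -> is_type n p ->
  exists2 k : T -> nat, p = count_pmf R n k & (\sum_t k t)%N = n.
Proof.
move=> n_gt0 [/fin_all_exists[k pE] p_sum1].
have pk : p = count_pmf R n k by apply/ffunP => t; rewrite ffunE pE.
exists k => //; apply/eqP; rewrite -(eqr_nat R); apply/eqP/divr1_eq.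
by rewrite -sum_count_pmf -pk.
Qed.

Lemma marg_row_margZS (R : realFieldType) (Z S U : finType)
  (M : {ffun Z * S * U -> R}) zs :
  marg fst (fun t => (t.1.2, t.2)) M (inl zs) = margZS M zs.
Proof.
transitivity (\sum_(x | x == zs) \sum_u M (x, u)).
  by rewrite pair_big; apply: eq_big => [[x u]|[x u] _] //=; rewrite andbT.
by rewrite big_pred1_eq ffunE; case: zs.
Qed.

Lemma marg_col_margSU (R : realFieldType) (Z S U : finType)
  (M : {ffun Z * S * U -> R}) su :
  marg fst (fun t => (t.1.2, t.2)) M (inr su) = margSU M su.
Proof.
case: su => s u; rewrite ffunE /=.
transitivity (\sum_(zs | zs.2 == s) \sum_(u' | u' == u) M (zs, u')).
  by rewrite pair_big_dep; apply: eq_big => [[x u']|[x u'] _] //=; rewrite xpair_eqE.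
rewrite (eq_bigr (fun zs => M (zs, u))) => [|zs _]; last by rewrite big_pred1_eq.
transitivity (\sum_z \sum_(s' | s' == s) M (z, s', u)); last first.
  by apply: eq_bigr => z _; rewrite big_pred1_eq.
by rewrite pair_big_dep; apply: eq_big => [[z s']|[z s'] _].
Qed.

Lemma natr_sum_weighted (R : numFieldType) (I : finType) (a : nat) (b : I -> nat) :
  (a <= \sum_i b i)%N -> \sum_i (a * b i)%:R / (\sum_i b i)%:R = a%:R :> R.
Proof.
have [b_sum0|b_sum_gt0] := posnP (\sum_i b i).
  by rewrite b_sum0 leqn0 => /eqP->; rewrite big1 // => i _; rewrite mul0n mul0r.
by rewrite -mulr_suml -natr_sum -big_distrr natrM mulfK // pnatr_eq0 -lt0n.
Qed.

Section CountPmfs.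
Variables (R : realFieldType) (Z S U : finType) (n : nat).
Variables (kZS : Z * S -> nat) (kSU : S * U -> nat).
Hypothesis n_gt0 : (0 < n)%N.
Hypothesis kZS_sum : (\sum_t kZS t)%N = n.
Let kS s := (\sum_z kZS (z, s))%N.
Hypothesis kS_eq : forall s, (\sum_u kSU (s, u))%N = kS s.

Local Notation pZS := (count_pmf R n kZS).
Local Notation pSU := (count_pmf R n kSU).

Lemma Pstar_count_pmf z s u :
  Pstar pZS pSU (z, s, u) = (kZS (z, s) * kSU (s, u))%:R / (kS s)%:R / n%:R.
Proof.
have n_neq0 : n%:R != 0 :> R by rewrite pnatr_eq0 -lt0n.
rewrite ffunE /margS_ZS (sum_count_pmf _ _ _ (fun z => (z, s))) -/(kS s) !ffunE.
rewrite mulf_eq0 invr_eq0 (negbTE n_neq0) orbF.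
have [->|kS_neq0] := eqVneq (kS s)%:R (0 : R); first by rewrite invr0 mulr0 mul0r.
by rewrite natrM; field; rewrite n_neq0 kS_neq0.
Qed.

Let lo (t : Z * S * U) : int := ((kZS t.1 * kSU (t.1.2, t.2)) %/ kS t.1.2)%N.
Let r (e : (Z * S) + (S * U)) : R :=
  match e with inl zs => (kZS zs)%:R | inr su => (kSU su)%:R end.
Let col (t : Z * S * U) := (t.1.2, t.2).
Let nPstar : {ffun Z * S * U -> R} := [ffun t => n%:R * Pstar pZS pSU t].

Lemma nPstarE z s u : nPstar (z, s, u) = (kZS (z, s) * kSU (s, u))%:R / (kS s)%:R.
Proof. by rewrite ffunE Pstar_count_pmf mulrC divfK // pnatr_eq0 -lt0n. Qed.

Lemma nPstar_in_box : in_box lo nPstar.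
Proof. by case=> [[z s] u]; rewrite nPstarE; apply: natr_divn_bounds. Qed.

Lemma nPstar_marg e : marg fst col nPstar e = r e.
Proof.
case: e => [[z s]|[s u]].
  rewrite marg_row_margZS ffunE /=; under eq_bigr do rewrite nPstarE.
  by rewrite -kS_eq natr_sum_weighted // kS_eq /kS (bigD1 z) //= leq_addr.
rewrite marg_col_margSU ffunE /=; under eq_bigr do rewrite nPstarE mulnC.
by rewrite natr_sum_weighted // -/(kS s) -kS_eq (bigD1 u) //= leq_addr.
Qed.

Lemma integral_point_in_setA N : integral_point fst col lo r N ->
  setA n pZS pSU [ffun t => n%:R^-1 * N t].
Proof.
have n_pos : 0 < n%:R :> R by rewrite ltr0n.
case=> N_int N_box N_marg; split.
- split=> [t|].
    have [k Nk] := N_int t; have /andP[lo_le _] := N_box t.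
    have k_ge0 : (0 <= k)%R.
      by apply: le_trans (le0z_nat _ : 0 <= lo t) _; rewrite -(ler_int R) -Nk.
    by case: k Nk k_ge0 => // m Nk _; exists m; rewrite ffunE Nk mulrC.
  under eq_bigr do rewrite ffunE.
  rewrite -mulr_sumr (partition_big fst predT) //=.
  rewrite (eq_bigr _ (fun zs _ => N_marg (inl zs))) /= -natr_sum kZS_sum mulVf //.
  exact: lt0r_neq0.
- by apply/ffunP => zs; rewrite -marg_row_margZS marg_scale N_marg !ffunE mulrC.
- by apply/ffunP => su; rewrite -marg_col_margSU marg_scale N_marg !ffunE mulrC.
- have n_inv_ge0 : 0 <= n%:R^-1 :> R by rewrite invr_ge0 ler0n.
  apply: bigmax_le => [|t _]; first by rewrite div1r.
  have -> : Pstar pZS pSU t = n%:R^-1 * nPstar t by rewrite [in RHS]ffunE mulKf ?lt0r_neq0.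
  rewrite ffunE -mulrBr normrM (ger0_norm n_inv_ge0) div1r -[X in _ <= X]mulr1.
  rewrite ler_wpM2l //; have /andP[N_lo N_hi] := N_box t.
  by have /andP[P_lo P_hi] := nPstar_in_box t; rewrite ler_norml; apply/andP; split; lra.
Qed.

Lemma Pstar_in_conv_hull_count_pmf : in_conv_hull (setA n pZS pSU) (Pstar pZS pSU).
Proof.
have r_int e : is_int (r e).
  by case: e => [zs|su]; [exists (kZS zs : int) | exists (kSU su : int)].
have := in_conv_hull_integral_points r_int nPstar_in_box nPstar_marg.
move/(in_conv_hull_scale integral_point_in_setA).
by congr in_conv_hull; apply/ffunP => t; rewrite !ffunE mulKf // pnatr_eq0 -lt0n.
Qed.

End CountPmfs.

Theorem lemma8 (R : realFieldType) (Z S U : finType) (n : nat) (n_gt0 : (0 < n)%N)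
  (pZS : {ffun Z * S -> R}) (pSU : {ffun S * U -> R}) :
  is_type n pZS -> is_type n pSU ->
  (forall s, margS_ZS pZS s = margS_SU pSU s) ->
  in_conv_hull (setA n pZS pSU) (Pstar pZS pSU).
Proof.
move=> /(is_type_count_pmf n_gt0)[kZS -> kZS_sum] /(is_type_count_pmf n_gt0)[kSU -> _].
move=> margS_eq; apply: Pstar_in_conv_hull_count_pmf => // s.
have n_neq0 : n%:R != 0 :> R by rewrite pnatr_eq0 -lt0n.
have := margS_eq s; rewrite /margS_ZS /margS_SU.
rewrite (sum_count_pmf _ _ _ (fun z => (z, s))) (sum_count_pmf _ _ _ (fun u => (s, u))).
by move=> /(mulIf (invr_neq0 n_neq0))/eqP; rewrite eqr_nat => /eqP.
Qed.
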